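(* Let $G$ be a group with finite generating set $S$, let $\Gamma=Cay(G,S)$, and let $k,m>0$. Then $\Gamma$ is $\varepsilon$-densely $(k,m)$-chordal for some $\varepsilon>0$ if and only if $G$ is $(i_0,k,m)$-chordal with respect to $S$ for some $i_0>0$.
   Context: $S^{\pm1}=S\cup S^{-1}\setminus\{e\}$; $Cay(G,S)$ has vertex set $G$, edges $\{g,gs\}$ ($s\in S^{\pm1}$), each edge isometric to $[0,1]$. A cycle in a graph is a simple closed path (of length at least 3); $L(\cdot)$ denotes length and $d_\gamma$ the length metric on the cycle $\gamma$. A shortcut in $\gamma$ is a path $\sigma$ joining vertices $p,q$ of $\gamma$ with $L(\sigma)<d_\gamma(p,q)$; it is strict if $\sigma\cap\gamma=\{p,q\}$, and then $p,q$ are its associated shortcut vertices. A graph is $\varepsilon$-densely $(k,m)$-chordal if for every cycle $\gamma$ with $L(\gamma)\ge k$ there are strict shortcuts $\sigma_1,\dots,\sigma_r$ with $L(\sigma_i)\le m$ whose associated shortcut vertices form an $\varepsilon$-dense subset of $(\gamma,d_\gamma)$ (every point of $\gamma$ is at $d_\gamma$-distance $<\varepsilon$ from one of them). A relation $s_1\cdots s_n=e$ with $n>2$, $s_i\in S^{\pm1}$, is simple if $s_ps_{p+1}\cdots s_q=e$ holds exactly when $(p,q)=(1,n)$. $G$ is $(i_0,k,m)$-chordal with respect to $S$ if for every simple relation $s_1\cdots s_n=e$ with $n\ge k$ there exist $1\le i\le i_0$, $i<j\le n$ and $s'_1,\dots,s'_r\in S^{\pm1}$ with $s_i\cdots s_j=s'_1\cdots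 s'_r$ and $r\le\min\{m,\,j-i,\,n-j+i-2\}$. *)

From Stdlib Require Import Reals Lra Lia List Arith.
Import ListNotations.
Open Scope R_scope.

Record group := Group {
  gcar :> Type;
  gmul : gcar -> gcar -> gcar;
  ginv : gcar -> gcar;
  gone : gcar;
  gmulA : forall x y z, gmul x (gmul y z) = gmul (gmul x y) z;
  gmul1 : forall x, gmul gone x = x;
  gmulV : forall x, gmul (ginv x) x = gone
}.

Section Cayley.
Variable G : group.
Variable S : list G.

Definition gprod (w : list G) : G := fold_right (gmul G) (gone G) w.

Definition Spm (x : G) : Prop := (In x S \/ In (ginv G x) S) /\ x <> gone G.

Definition generates : Prop :=
  forall g : G, exists w, Forall Spm w /\ g = gprod w.

Definition cadj (g h : G) : Prop := exists s, Spm s /\ h = gmul G g s.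

Fixpoint is_path (x : G) (l : list G) : Prop :=
  match l with
  | [] => True
  | y :: l' => cadj x y /\ is_path y l'
  end.

Definition is_cycle (c : list G) : Prop :=
  (3 <= length c)%nat /\ NoDup c /\
  forall i, (i < length c)%nat ->
    cadj (nth i c (gone G)) (nth ((i + 1) mod length c) c (gone G)).

Definition cycdist (n i j : nat) : nat :=
  Nat.min (Nat.max i j - Nat.min i j) (n - (Nat.max i j - Nat.min i j)).

(* d_gamma between arbitrary points of the cycle (parametrised by [0,n)) *)
Definition rcycdist (n x y : R) : R := Rmin (Rabs (x - y)) (n - Rabs (x - y)).

(* a strict shortcut in c joining c_i and c_j:
   sigma = x :: l is a path from c_i to c_j of length L(sigma) = length l,
   with L(sigma) < d_c(c_i,c_j), meeting c only at c_i, c_j. *)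
Definition strict_shortcut (c : list G) (i j : nat) (x : G) (l : list G) : Prop :=
  (i < length c)%nat /\ (j < length c)%nat /\
  x = nth i c (gone G) /\ last (x :: l) x = nth j c (gone G) /\
  is_path x l /\
  (length l < cycdist (length c) i j)%nat /\
  (forall v, In v (x :: l) -> In v c ->
     v = nth i c (gone G) \/ v = nth j c (gone G)).

Definition densely_chordal (eps : R) (k m : nat) : Prop :=
  forall c, is_cycle c -> (k <= length c)%nat ->
    exists sc : list (nat * nat * (G * list G)),
      (forall i j x l, In (i, j, (x, l)) sc ->
         strict_shortcut c i j x l /\ (length l <= m)%nat) /\
      (forall t : R, 0 <= t < INR (length c) ->
         exists i j x l, In (i, j, (x, l)) sc /\
           (rcycdist (INR (length c)) t (INR i) < eps \/
            rcycdist (INR (length c)) t (INR j) < eps)).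

(* the subword s_p ... s_q (1-based indices) *)
Definition subword (w : list G) (p q : nat) : list G :=
  firstn (Nat.succ q - p) (skipn (pred p) w).

Definition simple_relation (w : list G) : Prop :=
  Forall Spm w /\ (2 < length w)%nat /\ gprod w = gone G /\
  forall p q, (1 <= p)%nat -> (p <= q)%nat -> (q <= length w)%nat ->
    (gprod (subword w p q) = gone G <-> (p = 1 /\ q = length w)%nat).

(* G is (i0,k,m)-chordal w.r.t. S.  The bound r <= n - j + i - 2 is written
   r + 2 + j <= n + i to avoid truncated subtraction. *)
Definition group_chordal (i0 k m : nat) : Prop :=
  forall w, simple_relation w -> (k <= length w)%nat ->
    exists i j w',
      (1 <= i <= i0)%nat /\ (i < j <= length w)%nat /\
      Forall Spm w' /\ gprod (subword w i j) = gprod w' /\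
      (length w' <= m)%nat /\ (length w' <= j - i)%nat /\
      (length w' + 2 + j <= length w + i)%nat.

End Cayley.

(* The prefix products of a simple relation s_1 ... s_n = e are the vertices of
   a cycle of length n in the Cayley graph, and conversely the edge labels of a
   cycle read from any base vertex c_r form a simple relation.  Under left
   translation, a subword identity s_i ... s_j = s'_1 ... s'_r with the two
   length bounds is the same thing as a shortcut between the (i-1)-th and the
   j-th vertex.  If the graph is eps-densely chordal, some shortcut has an
   endpoint within eps <= N of the vertex N, hence among the first 2N letters:
   i0 = 2N works.  Conversely, (i0,k,m)-chordality gives for every base vertex
   c_r a shortcut of length <= m starting within i0 of c_r; cutting it at its
   first return to the cycle (repeatedly) makes it strict and moves its start
   by at most m, so these strict shortcuts are (i0+m+1)-dense. *)

From Stdlib Require Import Reals List Arith Lia Lra Classical.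
Import ListNotations.

Local Open Scope nat_scope.

Section GroupFacts.
Variable G : group.
Local Notation "x * y" := (gmul G x y).
Local Notation e := (gone G).
Local Notation iv := (ginv G).

Lemma gmulrV (x : G) : x * iv x = e.
Proof.
  rewrite <- (gmul1 G (x * iv x)), <- (gmulV G (iv x)) at 1.
  rewrite <- gmulA, (gmulA G (iv x) x (iv x)), gmulV, gmul1.
  apply gmulV.
Qed.

Lemma gmulr1 (x : G) : x * e = x.
Proof. rewrite <- (gmulV G x), gmulA, gmulrV, gmul1. reflexivity. Qed.

Lemma gmulK (x y : G) : iv x * (x * y) = y.
Proof. rewrite gmulA, gmulV, gmul1. reflexivity. Qed.

Lemma gmulKV (x y : G) : x * (iv x * y) = y.
Proof. rewrite gmulA, gmulrV, gmul1. reflexivity. Qed.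

Lemma gmulI (x y z : G) : x * y = x * z -> y = z.
Proof. intro E. rewrite <- (gmulK x y), E, gmulK. reflexivity. Qed.

Lemma ginv_uniq (x y : G) : x * y = e -> y = iv x.
Proof. intro E. rewrite <- (gmulK x y), E, gmulr1. reflexivity. Qed.

Lemma ginvK (x : G) : iv (iv x) = x.
Proof. symmetry. apply ginv_uniq, gmulV. Qed.

Lemma ginvM (x y : G) : iv (x * y) = iv y * iv x.
Proof.
  symmetry. apply ginv_uniq.
  rewrite gmulA, <- (gmulA G x y), gmulrV, gmulr1, gmulrV. reflexivity.
Qed.

Lemma ginv1 : iv e = e.
Proof. symmetry. apply ginv_uniq, gmul1. Qed.

Lemma gprod_cat (u v : list G) : gprod G (u ++ v) = gprod G u * gprod G v.
Proof.
  induction u as [|s u IH]; simpl.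
  - rewrite gmul1. reflexivity.
  - rewrite IH, gmulA. reflexivity.
Qed.

Lemma gprod_rev_inv (u : list G) : gprod G (rev (map iv u)) = iv (gprod G u).
Proof.
  induction u as [|s u IH]; simpl.
  - symmetry. apply ginv1.
  - rewrite gprod_cat, IH. simpl. rewrite gmulr1, ginvM. reflexivity.
Qed.

Lemma gprod_telescope (f : nat -> G) a len :
  gprod G (map (fun t => iv (f t) * f (S t)) (seq a len)) = iv (f a) * f (a + len).
Proof.
  revert a; induction len as [|len IH]; intro a; simpl.
  - rewrite Nat.add_0_r, gmulV. reflexivity.
  - rewrite IH, <- gmulA, gmulKV, Nat.add_succ_r. reflexivity.
Qed.

Lemma Spm_inv (S : list G) (x : G) : Spm G S x -> Spm G S (iv x).
Proof.
  intros [[Hx|Hx] Hne]; split.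
  - right. rewrite ginvK. exact Hx.
  - intro E. apply Hne. rewrite <- (ginvK x), E. apply ginv1.
  - left. exact Hx.
  - intro E. apply Hne. rewrite <- (ginvK x), E. apply ginv1.
Qed.

End GroupFacts.

Lemma cycdist_sym n a b : cycdist n a b = cycdist n b a.
Proof. unfold cycdist; lia. Qed.

Lemma cycdist_triangle n a b c : a < n -> b < n -> c < n ->
  cycdist n a c <= cycdist n a b + cycdist n b c.
Proof. unfold cycdist; lia. Qed.

Lemma add_mod_wrap n y d : y < n -> d <= n ->
  (y + d < n /\ (y + d) mod n = y + d) \/ (n <= y + d /\ (y + d) mod n = y + d - n).
Proof.
  intros Hy Hd. destruct (lt_dec (y + d) n) as [Hlt|Hge].
  - left. split; [exact Hlt|]. apply Nat.mod_small, Hlt.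
  - right. split; [lia|].
    replace (y + d) with ((y + d - n) + 1 * n) at 1 by lia.
    rewrite Nat.Div0.mod_add. apply Nat.mod_small. lia.
Qed.

Lemma cycdist_add_mod n x d : n <> 0 -> d <= n ->
  cycdist n (x mod n) ((x + d) mod n) = Nat.min d (n - d).
Proof.
  intros Hn Hd. rewrite <- Nat.Div0.add_mod_idemp_l.
  destruct (add_mod_wrap n (x mod n) d (Nat.mod_upper_bound x n Hn) Hd)
    as [[? ->]|[? ->]]; unfold cycdist; lia.
Qed.

Lemma mod_add_eq n x d : n <> 0 -> 1 <= d <= n -> x mod n = (x + d) mod n -> d = n.
Proof.
  intros Hn Hd. rewrite <- Nat.Div0.add_mod_idemp_l.
  destruct (add_mod_wrap n (x mod n) d (Nat.mod_upper_bound x n Hn) (proj2 Hd))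
    as [[? ->]|[? ->]]; lia.
Qed.

Lemma firstn_add_skipn {A} (w : list A) a b : a <= b ->
  firstn b w = firstn a w ++ firstn (b - a) (skipn a w).
Proof.
  intro Hab. rewrite <- (firstn_skipn a (firstn b w)), firstn_firstn, skipn_firstn_comm.
  rewrite Nat.min_l by exact Hab. reflexivity.
Qed.

Lemma firstn_seq start len t : firstn t (seq start len) = seq start (Nat.min t len).
Proof.
  revert start len; induction t as [|t IH]; intros start [|len]; try reflexivity.
  simpl. rewrite IH. reflexivity.
Qed.

Lemma firstn_succ_nth {A} (w : list A) i d : i < length w ->
  firstn (S i) w = firstn i w ++ [nth i w d].
Proof.
  revert w; induction i as [|i IH]; intros [|a w] Hi; simpl length in Hi; try lia.
  - reflexivity.
  - change (a :: firstn (S i) w = (a :: firstn i w) ++ [nth i w d]).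
    rewrite (IH w) by lia. reflexivity.
Qed.

Lemma nth_map_seq {A} (f : nat -> A) n t d : t < n -> nth t (map f (seq 0 n)) d = f t.
Proof.
  intro Ht. rewrite (nth_indep _ d (f 0)) by (rewrite length_map, length_seq; exact Ht).
  rewrite map_nth, seq_nth by exact Ht. reflexivity.
Qed.

Lemma last_cons_indep {A} (a : A) l d d' : last (a :: l) d = last (a :: l) d'.
Proof. revert a; induction l as [|b l IH]; intro a; [reflexivity|apply IH]. Qed.

Lemma last_cat_cons {A} (u : list A) y v d : last (u ++ y :: v) d = last (y :: v) d.
Proof.
  induction u as [|a u IH]; [reflexivity|].
  rewrite <- IH. simpl. destruct (u ++ y :: v) eqn:E; [destruct u; discriminate|reflexivity].
Qed.

Lemma In_last {A} (a : A) l d : In (last (a :: l) d) (a :: l).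
Proof.
  revert a; induction l as [|b l IH]; intro a; [left; reflexivity|].
  right. apply IH.
Qed.

Lemma split_first {A} (P : A -> Prop) (l : list A) :
  (exists y, In y l /\ P y) ->
  exists l1 y l2, l = l1 ++ y :: l2 /\ P y /\ Forall (fun v => ~ P v) l1.
Proof.
  induction l as [|a l IH]; intros [y [Hy Py]]; [destruct Hy|].
  destruct (classic (P a)) as [Pa|nPa].
  - exists [], a, l. repeat split; [exact Pa|constructor].
  - destruct Hy as [->|Hy]; [contradiction|].
    destruct IH as [l1 [z [l2 [-> [Pz F]]]]]; [exists y; split; assumption|].
    exists (a :: l1), z, l2. repeat split; [exact Pz|constructor; assumption].
Qed.

Lemma rcycdist_INR n a b : a <= n -> b <= n ->
  rcycdist (INR n) (INR a) (INR b) = INR (cycdist n a b).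
Proof.
  intros Ha Hb. unfold rcycdist, cycdist.
  assert (Hd : Rabs (INR a - INR b) = INR (Nat.max a b - Nat.min a b)).
  { destruct (Nat.le_ge_cases a b) as [H|H].
    - rewrite Nat.max_r, Nat.min_l, minus_INR, Rabs_minus_sym by exact H.
      apply Rabs_right. apply le_INR in H. lra.
    - rewrite Nat.max_l, Nat.min_r, minus_INR by exact H.
      apply Rabs_right. apply le_INR in H. lra. }
  rewrite Hd. assert (Hdn : Nat.max a b - Nat.min a b <= n) by lia.
  revert Hdn. generalize (Nat.max a b - Nat.min a b). intros d Hdn.
  rewrite <- minus_INR by exact Hdn.
  destruct (Nat.le_ge_cases d (n - d)) as [H|H].
  - rewrite Nat.min_l, Rmin_left by (try apply le_INR; exact H). reflexivity.
  - rewrite Nat.min_r, Rmin_right by (try apply le_INR; exact H). reflexivity.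
Qed.

Lemma rcycdist_shift n t s z : (rcycdist n t z <= rcycdist n s z + Rabs (t - s))%R.
Proof.
  unfold rcycdist.
  assert (H1 : (Rabs (t - z) <= Rabs (s - z) + Rabs (t - s))%R).
  { replace (t - z)%R with ((s - z) + (t - s))%R by ring. apply Rabs_triang. }
  assert (H2 : (Rabs (s - z) <= Rabs (t - z) + Rabs (t - s))%R).
  { replace (s - z)%R with ((t - z) + - (t - s))%R by ring.
    rewrite <- (Rabs_Ropp (t - s)). apply Rabs_triang. }
  unfold Rmin. destruct (Rle_dec _ _), (Rle_dec _ _); lra.
Qed.

Lemma floor_lt n t : (0 <= t < INR n)%R -> exists r, r < n /\ (INR r <= t < INR r + 1)%R.
Proof.
  induction n as [|n IH]; intros [H0 H1]; [simpl in H1; lra|].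
  destruct (Rlt_dec t (INR n)) as [Hlt|Hge].
  - destruct (IH (conj H0 Hlt)) as [r [Hr Ht]]. exists r. split; [lia|exact Ht].
  - exists n. rewrite S_INR in H1. split; [lia|lra].
Qed.

Lemma finite_witness_list {A} n (Q : A -> Prop) (P : nat -> A -> Prop) :
  (forall r, r < n -> exists y, Q y /\ P r y) ->
  exists L, Forall Q L /\ forall r, r < n -> exists y, In y L /\ P r y.
Proof.
  induction n as [|n IH]; intro H.
  - exists []. split; [constructor|intros r Hr; lia].
  - destruct IH as [L [HQ HP]]; [intros r Hr; apply H; lia|].
    destruct (H n (Nat.lt_succ_diag_r n)) as [y [Qy Py]].
    exists (y :: L). split; [constructor; assumption|].
    intros r Hr. destruct (Nat.eq_dec r n) as [->|Hne].
    + exists y. split; [left; reflexivity|exact Py].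
    + destruct (HP r ltac:(lia)) as [z [Hz Pz]]. exists z. split; [right; exact Hz|exact Pz].
Qed.

Section CayleyPaths.
Variables (G : group) (S : list G).
Local Notation "x * y" := (gmul G x y).
Local Notation e := (gone G).
Local Notation iv := (ginv G).

Lemma is_path_cat x u v :
  is_path G S x (u ++ v) <-> is_path G S x u /\ is_path G S (last (x :: u) x) v.
Proof.
  revert x; induction u as [|a u IH]; intro x; [simpl; tauto|].
  cbn [is_path app]. rewrite IH.
  change (last (x :: a :: u) x) with (last (a :: u) x).
  rewrite (last_cons_indep a u x a). tauto.
Qed.

Lemma path_word x l : is_path G S x l ->
  exists u, Forall (Spm G S) u /\ length u = length l /\ last (x :: l) x = x * gprod G u.
Proof.
  revert x; induction l as [|a l IH]; intros x Hp.
  - exists []. repeat split; [constructor|]. symmetry. apply gmulr1.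
  - destruct Hp as [[s [Hs ->]] Hp]. destruct (IH _ Hp) as [u [Fu [Lu Eu]]].
    exists (s :: u). repeat split; [constructor; assumption|simpl; congruence|].
    change (last (x :: x * s :: l) x) with (last (x * s :: l) x).
    rewrite (last_cons_indep _ l x (x * s)), Eu. symmetry. apply gmulA.
Qed.

Lemma word_path x u : Forall (Spm G S) u ->
  exists l, is_path G S x l /\ length l = length u /\ last (x :: l) x = x * gprod G u.
Proof.
  revert x; induction u as [|s u IH]; intros x Fu.
  - exists []. repeat split. symmetry. apply gmulr1.
  - inversion Fu as [|? ? Hs Fu']; subst. destruct (IH (x * s) Fu') as [l [Pl [Ll El]]].
    exists (x * s :: l). repeat split; [exists s; split; [exact Hs|reflexivity]|exact Pl|simpl; congruence|].
    change (last (x :: x * s :: l) x) with (last (x * s :: l) x).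
    rewrite (last_cons_indep _ l x (x * s)), El. symmetry. apply gmulA.
Qed.

Section StrictShortcuts.
Variable c : list G.
Hypothesis c_uniq : NoDup c.
Local Notation n := (length c).

Lemma strict_shortcut_first_return a b x l y :
  a < n -> b < n -> x = nth a c e -> y = nth b c e ->
  is_path G S x (l ++ [y]) -> Forall (fun v => ~ In v c) l ->
  length l + 1 < cycdist n a b -> strict_shortcut G S c a b x (l ++ [y]).
Proof.
  intros Ha Hb Hx Hy Hp Hl Hd.
  assert (Hlast : last (x :: l ++ [y]) x = y) by exact (last_last (x :: l) y x).
  repeat split; try assumption.
  - rewrite Hlast. exact Hy.
  - rewrite length_app. simpl. lia.
  - intros v [<-|Hv] Hvc; [left; exact Hx|].
    apply in_app_or in Hv as [Hv|[<-|[]]]; [|right; exact Hy].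
    rewrite Forall_forall in Hl. destruct (Hl v Hv Hvc).
Qed.

(* Follow the path to its first return to [c]: either that initial piece is
   already a strict shortcut, or the rest of the path is a shorter shortcut. *)
Lemma shortcut_strict_shortcut l : forall a b x,
  a < n -> b < n -> x = nth a c e -> last (x :: l) x = nth b c e ->
  is_path G S x l -> length l < cycdist n a b ->
  exists a' b' x' l', strict_shortcut G S c a' b' x' l' /\
    length l' <= length l /\ cycdist n a a' <= length l.
Proof.
  induction l as [l IH] using (induction_ltof1 _ (@length G)); unfold ltof in IH.
  intros a b x Ha Hb Hx Hl Hp Hd.
  destruct l as [|z l0].
  { simpl in Hl. subst x. assert (a = b) by (eapply NoDup_nth; eauto).
    subst b. unfold cycdist in Hd. lia. }
  destruct (split_first (fun v => In v c) (z :: l0)) as [l1 [y [l2 [El [Hyc Hl1]]]]].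
  { exists (last (z :: l0) x). split; [apply In_last|].
    change (last (x :: z :: l0) x) with (last (z :: l0) x) in Hl.
    rewrite Hl. apply nth_In, Hb. }
  rewrite El in *. clear z l0 El.
  destruct (In_nth c y e Hyc) as [b' [Hb' Ey]].
  assert (Hp' : is_path G S x ((l1 ++ [y]) ++ l2)) by (rewrite <- app_assoc; exact Hp).
  apply is_path_cat in Hp' as [Hp1 Hp2].
  assert (Hy : last (x :: l1 ++ [y]) x = y) by exact (last_last (x :: l1) y x).
  rewrite Hy in Hp2.
  rewrite length_app in Hd |- *. simpl length in Hd |- *.
  destruct (lt_dec (length l1 + 1) (cycdist n a b')) as [Hq|Hq].
  - exists a, b', x, (l1 ++ [y]).
    split; [apply strict_shortcut_first_return; auto|].
    rewrite length_app. simpl. unfold cycdist. lia.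
  - assert (Hl2 : last (y :: l2) y = nth b c e).
    { rewrite <- Hl, (last_cons_indep y l2 y x).
      symmetry. exact (last_cat_cons (x :: l1) y l2 x). }
    assert (Hab := cycdist_triangle n a b' b Ha Hb' Hb).
    destruct (IH l2 ltac:(rewrite length_app; simpl; lia) b' b y Hb' Hb (eq_sym Ey) Hl2 Hp2
      ltac:(lia)) as [a' [b'' [x' [l' [Hs [Hl' Ha']]]]]].
    exists a', b'', x', l'. split; [exact Hs|split; [lia|]].
    assert (Ha'n : a' < n) by apply Hs.
    assert (Haa' := cycdist_triangle n a b' a' Ha Hb' Ha'n). lia.
Qed.

End StrictShortcuts.

Lemma gprod_firstn_subword w a b : a <= b ->
  gprod G (firstn b w) = gprod G (firstn a w) * gprod G (subword G w (a + 1) b).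
Proof.
  intro Hab. rewrite (firstn_add_skipn w a b Hab), gprod_cat. unfold subword.
  change (Nat.succ b) with (Datatypes.S b).
  replace (pred (a + 1)) with a by lia. replace (Datatypes.S b - (a + 1)) with (b - a) by lia.
  reflexivity.
Qed.

Section PrefixCycle.
Variable w : list G.
Hypothesis w_simple : simple_relation G S w.
Local Notation n := (length w).

Definition prefix_cycle := map (fun t => gprod G (firstn t w)) (seq 0 n).

Lemma prefix_cycle_length : length prefix_cycle = n.
Proof. unfold prefix_cycle. rewrite length_map, length_seq. reflexivity. Qed.

Lemma nth_prefix_cycle t : t < n -> nth t prefix_cycle e = gprod G (firstn t w).
Proof. apply (nth_map_seq (fun t => gprod G (firstn t w))). Qed.

Lemma nth_prefix_cycle_neq a b : a < b -> b < n ->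
  nth a prefix_cycle e <> nth b prefix_cycle e.
Proof.
  intros Hab Hb E. rewrite !nth_prefix_cycle, (gprod_firstn_subword w a b) in E by lia.
  rewrite <- (gmulr1 G (gprod G (firstn a w))) in E at 1. apply gmulI in E.
  destruct w_simple as [_ [_ [_ Hsimple]]].
  assert (a + 1 = 1 /\ b = n) by (apply Hsimple; [lia|lia|lia|symmetry; exact E]).
  lia.
Qed.

Lemma prefix_cycle_is_cycle : is_cycle G S prefix_cycle.
Proof.
  destruct w_simple as [Hw [Hn [Hprod _]]].
  rewrite Forall_forall in Hw. unfold is_cycle. rewrite prefix_cycle_length.
  split; [lia|split].
  - apply (NoDup_nth prefix_cycle e). rewrite prefix_cycle_length. intros i j Hi Hj E.
    destruct (Nat.lt_total i j) as [H|[H|H]]; [|exact H|].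
    + destruct (nth_prefix_cycle_neq i j H Hj E).
    + destruct (nth_prefix_cycle_neq j i H Hi (eq_sym E)).
  - intros i Hi. exists (nth i w e). split; [apply Hw, nth_In, Hi|].
    assert (Hstep : gprod G (firstn (i + 1) w) = gprod G (firstn i w) * nth i w e).
    { rewrite Nat.add_1_r, (firstn_succ_nth w i e Hi), gprod_cat. simpl.
      rewrite gmulr1. reflexivity. }
    rewrite (nth_prefix_cycle i Hi).
    destruct (Nat.eq_dec (i + 1) n) as [Hlast|Hlt].
    + rewrite Hlast, Nat.Div0.mod_same, nth_prefix_cycle by lia. simpl.
      rewrite <- Hstep, Hlast, firstn_all. symmetry. exact Hprod.
    + rewrite Nat.mod_small, nth_prefix_cycle by lia. exact Hstep.
Qed.

(* The [a]-th vertex is [s_1 ... s_a], so [u] rewrites [s_(a+1) ... s_b]. *)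
Lemma group_chordal_witness a b u i0 m : a < b -> b < n -> Forall (Spm G S) u ->
  nth b prefix_cycle e = nth a prefix_cycle e * gprod G u ->
  length u < cycdist n a b -> length u <= m -> a + 1 <= i0 ->
  exists i j w', 1 <= i <= i0 /\ i < j <= n /\
    Forall (Spm G S) w' /\ gprod G (subword G w i j) = gprod G w' /\
    length w' <= m /\ length w' <= j - i /\ length w' + 2 + j <= n + i.
Proof.
  intros Hab Hb Hu E Hd Hm Hi0.
  assert (Hu0 : u <> []).
  { intros ->. simpl in E. rewrite gmulr1 in E.
    exact (nth_prefix_cycle_neq a b Hab Hb (eq_sym E)). }
  assert (1 <= length u) by (destruct u; [contradiction|simpl; lia]).
  rewrite !nth_prefix_cycle, (gprod_firstn_subword w a b) in E by lia.
  apply gmulI in E.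
  exists (a + 1), b, u. unfold cycdist in Hd.
  repeat split; try lia; assumption.
Qed.

End PrefixCycle.

Section Rotations.
Variable c : list G.
Hypothesis c_cycle : is_cycle G S c.
Local Notation n := (length c).

Definition cycle_vertex r t := nth ((r + t) mod n) c e.

Definition rotation_word r :=
  map (fun t => iv (cycle_vertex r t) * cycle_vertex r (Datatypes.S t)) (seq 0 n).

Lemma cycle_length_neq0 : n <> 0.
Proof. destruct c_cycle as [Hn _]. lia. Qed.

Lemma rotation_word_length r : length (rotation_word r) = n.
Proof. unfold rotation_word. rewrite length_map, length_seq. reflexivity. Qed.

Lemma cycle_vertex_period r : cycle_vertex r n = cycle_vertex r 0.
Proof.
  unfold cycle_vertex. rewrite Nat.add_0_r.
  replace (r + n) with (r + 1 * n) by lia. rewrite Nat.Div0.mod_add. reflexivity.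
Qed.

Lemma gprod_subword_rotation_word r p q : 1 <= p -> p <= q -> q <= n ->
  gprod G (subword G (rotation_word r) p q) = iv (cycle_vertex r (p - 1)) * cycle_vertex r q.
Proof.
  intros Hp Hpq Hq. unfold subword, rotation_word.
  rewrite skipn_map, firstn_map, skipn_seq, firstn_seq, gprod_telescope.
  destruct p as [|p]; [lia|]. cbn [pred Nat.add]. rewrite Nat.sub_succ, Nat.sub_1_r.
  simpl pred. replace (p + Nat.min (q - p) (n - p)) with q by lia. reflexivity.
Qed.

Lemma rotation_word_simple r : simple_relation G S (rotation_word r).
Proof.
  assert (Hn := cycle_length_neq0).
  destruct c_cycle as [Hn3 [Hnodup Hadj]].
  split; [|split; [|split]].
  - apply Forall_forall. intros s Hs. unfold rotation_word in Hs.
    apply in_map_iff in Hs as [t [<- _]].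
    destruct (Hadj ((r + t) mod n) (Nat.mod_upper_bound _ _ Hn)) as [s [Hs E]].
    unfold cycle_vertex. rewrite Nat.Div0.add_mod_idemp_l, <- Nat.add_assoc, Nat.add_1_r in E.
    rewrite E, gmulK. exact Hs.
  - rewrite rotation_word_length. lia.
  - unfold rotation_word. rewrite gprod_telescope. simpl. rewrite cycle_vertex_period. apply gmulV.
  - intros p q Hp Hpq Hq. rewrite rotation_word_length in Hq |- *.
    rewrite gprod_subword_rotation_word by assumption. split.
    + intro E. apply ginv_uniq in E. rewrite ginvK in E. unfold cycle_vertex in E.
      apply NoDup_nth in E; try apply Nat.mod_upper_bound; try exact Hnodup; try exact Hn.
      replace (r + q) with (r + (p - 1) + (q - (p - 1))) in E by lia.
      symmetry in E. apply mod_add_eq in E; [lia|exact Hn|lia].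
    + intros [-> ->]. simpl. rewrite cycle_vertex_period. apply gmulV.
Qed.

Lemma group_chordal_strict_shortcut i0 k m r :
  group_chordal G S i0 k m -> k <= n -> r < n ->
  exists a b x l, strict_shortcut G S c a b x l /\ length l <= m /\ cycdist n r a <= i0 + m.
Proof.
  intros Hg Hk Hr. assert (Hn := cycle_length_neq0).
  assert (Hnodup : NoDup c) by apply c_cycle.
  destruct (Hg (rotation_word r) (rotation_word_simple r)) as [i [j [u [Hi [Hj [Hu [Eu [Hm Hwrap]]]]]]]];
    [rewrite rotation_word_length; exact Hk|].
  rewrite rotation_word_length in Hj, Hwrap.
  rewrite gprod_subword_rotation_word in Eu by lia.
  destruct (word_path (cycle_vertex r (i - 1)) u Hu) as [l [Hp [Hl El]]].
  rewrite <- Eu, gmulKV in El.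
  assert (Hd : length l < cycdist n ((r + (i - 1)) mod n) ((r + j) mod n)).
  { replace (r + j) with (r + (i - 1) + (j - i + 1)) by lia.
    rewrite cycdist_add_mod by lia. lia. }
  destruct (shortcut_strict_shortcut c Hnodup l _ _ _ (Nat.mod_upper_bound _ _ Hn)
    (Nat.mod_upper_bound _ _ Hn) eq_refl El Hp Hd) as [a [b [x [l' [Hs [Hl' Ha]]]]]].
  exists a, b, x, l'. split; [exact Hs|split; [lia|]].
  assert (Han : a < n) by apply Hs.
  assert (Hra : cycdist n r ((r + (i - 1)) mod n) <= i - 1).
  { rewrite <- (Nat.mod_small r n Hr) at 1. rewrite cycdist_add_mod by lia. lia. }
  assert (Hr' : (r + (i - 1)) mod n < n) by (apply Nat.mod_upper_bound, Hn).
  assert (Htri := cycdist_triangle n r _ a Hr Hr' Han). lia.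
Qed.

End Rotations.
End CayleyPaths.

Section Chordality.
Variables (G : group) (S : list G).

Lemma densely_chordal_shortcut_near_start eps k m N c :
  densely_chordal G S eps k m -> (eps <= INR N)%R -> is_cycle G S c -> k <= length c ->
  exists a b x l, strict_shortcut G S c a b x l /\ length l <= m /\ Nat.min a b < 2 * N.
Proof.
  intros Hdense HN Hc Hk. destruct (Hdense c Hc Hk) as [sc [Hsc Hcover]].
  assert (Hn : 3 <= length c) by apply Hc.
  destruct (le_lt_dec (length c) (2 * N)) as [Hsmall|Hbig].
  - destruct (Hcover 0%R) as [a [b [x [l [Hin _]]]]].
    { split; [lra|apply lt_0_INR; lia]. }
    destruct (Hsc a b x l Hin) as [Hs Hl].
    exists a, b, x, l. split; [exact Hs|split; [exact Hl|]].
    destruct Hs as [Ha [Hb _]]. lia.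
  - destruct (Hcover (INR N)) as [a [b [x [l [Hin Hnear]]]]].
    { split; [apply pos_INR|apply lt_INR; lia]. }
    destruct (Hsc a b x l Hin) as [Hs Hl].
    exists a, b, x, l. split; [exact Hs|split; [exact Hl|]].
    assert (Hclose : forall z, z < length c ->
      (rcycdist (INR (length c)) (INR N) (INR z) < eps)%R -> z < 2 * N).
    { intros z Hz Hnz. rewrite rcycdist_INR in Hnz by lia.
      assert (Hzn := INR_lt _ _ (Rlt_le_trans _ _ _ Hnz HN)). unfold cycdist in Hzn. lia. }
    destruct Hs as [Ha [Hb _]].
    destruct Hnear as [Hnear|Hnear]; apply Hclose in Hnear; lia.
Qed.

Lemma group_chordal_of_densely_chordal eps k m : (0 < eps)%R ->
  densely_chordal G S eps k m -> exists i0, 0 < i0 /\ group_chordal G S i0 k m.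
Proof.
  intros Heps Hdense.
  destruct (INR_archimed 1 eps ltac:(lra)) as [N HN]. rewrite Rmult_1_r in HN.
  assert (HN0 : 0 < N) by (destruct N; [simpl in HN; lra|lia]).
  exists (2 * N). split; [lia|]. intros w Hw Hk.
  destruct (densely_chordal_shortcut_near_start eps k m N (prefix_cycle G w) Hdense
    ltac:(lra) (prefix_cycle_is_cycle G S w Hw) ltac:(rewrite prefix_cycle_length; exact Hk))
    as [a [b [x [l [Hs [Hm Hab]]]]]].
  destruct Hs as [Ha [Hb [Hx [Hl [Hp [Hd _]]]]]].
  rewrite prefix_cycle_length in Ha, Hb, Hd.
  destruct (path_word G S x l Hp) as [u [Hu [Hlu Eu]]]. rewrite Hl, Hx in Eu.
  destruct (Nat.lt_total a b) as [Hlt|[<-|Hgt]].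
  - apply (group_chordal_witness G S w Hw a b u); lia || assumption.
  - unfold cycdist in Hd. lia.
  - apply (group_chordal_witness G S w Hw b a (rev (map (ginv G) u))); try lia.
    + apply Forall_rev, Forall_map. eapply Forall_impl; [apply Spm_inv|exact Hu].
    + rewrite gprod_rev_inv, Eu, <- gmulA, gmulrV, gmulr1. reflexivity.
    + rewrite length_rev, length_map, cycdist_sym. lia.
    + rewrite length_rev, length_map. lia.
Qed.

Lemma densely_chordal_of_group_chordal i0 k m :
  group_chordal G S i0 k m -> densely_chordal G S (INR (i0 + m) + 1) k m.
Proof.
  intros Hg c Hc Hk.
  destruct (finite_witness_list (length c)
    (fun y : nat * nat * (G * list G) =>
       let '(a, b, (x, l)) := y in strict_shortcut G S c a b x l /\ length l <= m)
    (fun r y => cycdist (length c) r (fst (fst y)) <= i0 + m)) as [sc [Hsc Hcover]].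
  { intros r Hr.
    destruct (group_chordal_strict_shortcut G S c Hc i0 k m r Hg Hk Hr)
      as [a [b [x [l [Hs [Hl Hra]]]]]].
    exists (a, b, (x, l)). split; [split|]; assumption. }
  exists sc. split.
  - intros a b x l Hin. rewrite Forall_forall in Hsc. exact (Hsc _ Hin).
  - intros t Ht. destruct (floor_lt _ t Ht) as [r [Hr Hrt]].
    destruct (Hcover r Hr) as [[[a b] [x l]] [Hin Hra]].
    exists a, b, x, l. split; [exact Hin|left].
    rewrite Forall_forall in Hsc. destruct (Hsc _ Hin) as [[Ha _] _]. simpl in Hra.
    assert (Hrd := rcycdist_shift (INR (length c)) t (INR r) (INR a)).
    rewrite rcycdist_INR in Hrd by lia.
    apply le_INR in Hra.
    assert (Rabs (t - INR r) < 1)%R by (rewrite Rabs_right; lra).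
    lra.
Qed.

End Chordality.

Local Open Scope R_scope.

Theorem theorem9 (G : group) (S : list G) (k m : nat) :
  generates G S -> (0 < k)%nat -> (0 < m)%nat ->
  ((exists eps : R, 0 < eps /\ densely_chordal G S eps k m) <->
   (exists i0 : nat, (0 < i0)%nat /\ group_chordal G S i0 k m)).
Proof.
  intros _ _ _. split.
  - intros [eps [Heps Hdense]]. exact (group_chordal_of_densely_chordal G S eps k m Heps Hdense).
  - intros [i0 [_ Hg]]. exists (INR (i0 + m) + 1). split.
    + assert (H := pos_INR (i0 + m)). lra.
    + exact (densely_chordal_of_group_chordal G S i0 k m Hg).
Qed.
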